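(* If $G$ is a complete multipartite graph on $2n$ vertices with independence number $\alpha(G)\leq n$, then $G$ contains at least $n!$ perfect matchings.
   Context: A graph $G$ is complete multipartite if there is a partition of $V(G)$ such that two vertices are adjacent if and only if they lie in different parts. $\alpha(G)$ is the size of a largest independent (edge-free) vertex set. A perfect matching is a set of vertex-disjoint edges covering all vertices. *)

From mathcomp Require Import all_boot.
Set Implicit Arguments. Unset Strict Implicit. Unset Printing Implicit Defensive.

Definition simple_graph (T : finType) (e : rel T) : Prop :=
  symmetric e /\ irreflexive e.

Definition complete_multipartite (T : finType) (e : rel T) : Prop :=
  exists P : {set {set T}}, partition P [set: T] /\
    forall x y : T, e x y = (pblock P x != pblock P y).

Definition independent (T : finType) (e : rel T) (S : {set T}) : bool :=
  [forall x in S, forall y in S, ~~ e x y].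

Definition alpha (T : finType) (e : rel T) : nat :=
  \max_(S : {set T} | independent e S) #|S|.

Definition is_edge (T : finType) (e : rel T) (A : {set T}) : bool :=
  [exists x, exists y, (A == [set x; y]) && e x y].

Definition perfect_matching (T : finType) (e : rel T) (M : {set {set T}}) : bool :=
  [forall A in M, is_edge e A] && partition M [set: T].

From mathcomp Require Import all_boot zify.

(* Colour each vertex by its part: colour classes are independent, so every
   class has at most n of the 2n vertices. Induct on n for an arbitrary vertex
   set S, and pick x in a largest class of S. As that class has at most n+1 of
   the 2n+2 vertices, x has at least n+1 neighbours y. Deleting x and such a y
   leaves every class with at most n vertices: the classes of x and y shrink,
   and any other class c satisfies |c| <= |class of x| and
   |c| + |class of x| < |S|, since y lies in neither. Adding the edge {x, y} to
   the matchings of S \ {x, y} gives matchings of S that are distinct for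
   distinct y (y is the partner of x), hence at least (n+1) n! of them. *)

Set Implicit Arguments. Unset Strict Implicit. Unset Printing Implicit Defensive.

Lemma set2_inj (T : finType) (x : T) : injective (fun y => [set x; y]).
Proof.
move=> i j /setP eqij; have := eqij j; have := eqij i.
rewrite !inE !eqxx !orbT => /esym/orP[/eqP-> | /eqP //].
by rewrite orbb => /eqP.
Qed.

Lemma partition_setU1D (T : finType) (P : {set {set T}}) (D B : {set T}) :
  partition P (D :\: B) -> B != set0 -> B \subset D -> partition (B |: P) D.
Proof.
move=> partP B0 BD; have <- : B :|: D :\: B = D by rewrite -{1}(setIidPr BD) setID.
apply: partitionU1 => //.
by rewrite -setI_eq0 setIDA setIC setDIl setDv setI0.
Qed.

Lemma partitionD_notin (T : finType) (P : {set {set T}}) (D B : {set T}) :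
  partition P (D :\: B) -> B != set0 -> B \notin P.
Proof.
move=> partP B0; apply/negP => /(partitionS partP).
by rewrite subsetD -setI_eq0 setIid (negbTE B0) andbF.
Qed.

Lemma sum_card_disjoint_leq (I U : finType) (F : I -> {set U}) (X : {set U}) :
    (forall i j, i != j -> [disjoint F i & F j]) -> (forall i, F i \subset X) ->
  \sum_i #|F i| <= #|X|.
Proof.
move=> disjF subFX; apply: (@leq_trans #|\bigcup_i F i|); last first.
  by apply: subset_leq_card; apply/bigcupsP => i _; apply: subFX.
rewrite -sum1_card partition_disjoint_bigcup //.
by apply: leq_sum => i _; rewrite sum1_card.
Qed.

Section PerfectMatchingsOn.
Variables (T : finType) (e : rel T).

Definition perfect_matching_on (S : {set T}) (M : {set {set T}}) : bool :=
  [forall A in M, is_edge e A] && partition M S.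

Lemma perfect_matching_on_set0 : perfect_matching_on set0 set0.
Proof.
apply/andP; split; first by apply/forallP => A; rewrite inE.
by rewrite partition_set0.
Qed.

Lemma perfect_matching_on_setU1 (S : {set T}) (M : {set {set T}}) (x y : T) :
    e x y -> x \in S -> y \in S -> perfect_matching_on (S :\: [set x; y]) M ->
  perfect_matching_on S ([set x; y] |: M).
Proof.
move=> exy xS yS /andP[edgesM partM]; apply/andP; split.
  apply/forall_inP => A /setU1P[->|AM]; last exact: (forall_inP edgesM).
  by apply/existsP; exists x; apply/existsP; exists y; rewrite eqxx exy.
apply: partition_setU1D partM _ _; first by apply/set0Pn; exists x; apply: set21.
by apply/subsetP => z /set2P[]->.
Qed.

Lemma sum_perfect_matchings_setD2 (S : {set T}) (x : T) : x \in S ->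
  \sum_(y in S | e x y) #|[set M | perfect_matching_on (S :\: [set x; y]) M]|
    <= #|[set M | perfect_matching_on S M]|.
Proof.
move=> xS.
pose matched_to y := [set M | perfect_matching_on S M & pblock M x == [set x; y]].
apply: (@leq_trans (\sum_y #|matched_to y|)); last first.
  apply: sum_card_disjoint_leq => [i j neq_ij | y]; last first.
    by apply/subsetP => M; rewrite !inE => /andP[].
  rewrite -setI_eq0; apply/set0Pn => -[M]; rewrite !inE.
  case/andP=> /andP[_ /eqP->] /andP[_ /eqP/set2_inj eq_ij].
  by rewrite eq_ij eqxx in neq_ij.
rewrite [leqRHS](bigID (fun y => (y \in S) && e x y)) /=.
apply: leq_trans (leq_addr _ _); apply: leq_sum => y /andP[yS exy].
have notin_M M : perfect_matching_on (S :\: [set x; y]) M -> [set x; y] \notin M.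
  by case/andP=> _ /partitionD_notin; apply; apply/set0Pn; exists x; apply: set21.
rewrite -(card_in_imset (f := fun M => [set x; y] |: M)); last first.
  move=> M1 M2; rewrite !inE => /notin_M M1xy /notin_M M2xy eqM.
  by rewrite -(setU1K M1xy) eqM setU1K.
apply/subset_leq_card/subsetP => N /imsetP[M]; rewrite inE => pmM ->.
have pmxyM := perfect_matching_on_setU1 exy xS yS pmM.
rewrite !inE pmxyM (@def_pblock _ _ [set x; y]) ?setU11 ?set21 ?eqxx //.
by case/andP: pmxyM => _ /partition_trivIset.
Qed.

End PerfectMatchingsOn.

Section ColorClasses.
Variables (T : finType) (C : eqType) (col : T -> C).

Definition color_class (S : {set T}) (c : C) : {set T} := [set z in S | col z == c].

Lemma color_classD (S A : {set T}) c : color_class (S :\: A) c = color_class S c :\: A.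
Proof. by apply/setP => z; rewrite !inE andbA. Qed.

Lemma card_color_classD_lt (S A : {set T}) x : x \in S -> x \in A ->
  #|color_class (S :\: A) (col x)| < #|color_class S (col x)|.
Proof.
move=> xS xA; rewrite color_classD; apply: proper_card.
apply/properP; split; first exact: subsetDl.
by exists x; rewrite !inE ?xA ?xS ?eqxx.
Qed.

Lemma card_color_classU_lt (S : {set T}) c1 c2 y :
    c1 != c2 -> y \in S -> col y != c1 -> col y != c2 ->
  #|color_class S c1| + #|color_class S c2| < #|S|.
Proof.
move=> c12 yS yc1 yc2.
have /leqifP := leq_card_setU (color_class S c1) (color_class S c2).
have -> : [disjoint color_class S c1 & color_class S c2].
  rewrite -setI_eq0; apply/set0Pn => -[z]; rewrite !inE.
  case/andP=> /andP[_ /eqP zc1] /andP[_ /eqP zc2].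
  by rewrite -zc1 zc2 eqxx in c12.
move=> /eqP <-; apply: proper_card; apply/properP; split.
  by apply/subsetP => z; rewrite !inE => /orP[] /andP[].
by exists y; rewrite // !inE (negbTE yc1) (negbTE yc2) andbF.
Qed.

Lemma card_color_class_setD2 n (S : {set T}) x y :
    #|S| = n.+1.*2 -> (forall c, #|color_class S c| <= n.+1) ->
    x \in S -> {in S, forall z, #|color_class S (col z)| <= #|color_class S (col x)|} ->
    y \in S -> col y != col x ->
  forall c, #|color_class (S :\: [set x; y]) c| <= n.
Proof.
move=> cardS small xS xmax yS yx c.
have [->|cx] := eqVneq c (col x).
  by have := card_color_classD_lt xS (set21 x y); have := small (col x); lia.
have [->|cy] := eqVneq c (col y).
  by have := card_color_classD_lt yS (set22 x y); have := small (col y); lia.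
rewrite color_classD; apply: leq_trans (subset_leq_card (subsetDl _ _)) _.
have [->|/set0Pn[z]] := eqVneq (color_class S c) set0; first by rewrite cards0.
rewrite inE => /andP[zS /eqP zc]; have := xmax z zS.
have := card_color_classU_lt (c1 := col x) (c2 := c) _ yS yx.
by rewrite eq_sym cx eq_sym cy zc cardS => /(_ isT isT); lia.
Qed.

End ColorClasses.

Section CompleteMultipartite.
Variables (T : finType) (C : eqType) (col : T -> C) (e : rel T).
Hypothesis e_col : forall x y, e x y = (col x != col y).

Lemma independent_color_class (S : {set T}) c : independent e (color_class col S c).
Proof.
apply/forall_inP => u; rewrite inE => /andP[_ /eqP uc].
by apply/forall_inP => v; rewrite inE => /andP[_ /eqP vc]; rewrite e_col uc vc eqxx.
Qed.

Lemma perfect_matchings_on_ge n (S : {set T}) :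
    #|S| = n.*2 -> (forall c, #|color_class col S c| <= n) ->
  n`! <= #|[set M | perfect_matching_on e S M]|.
Proof.
elim: n S => [|n IHn] S cardS small.
  have -> : S = set0 by apply/cards0_eq.
  rewrite fact0 card_gt0; apply/set0Pn; exists set0.
  by rewrite inE perfect_matching_on_set0.
have [x0 x0S] : exists x0, x0 \in S by apply/set0Pn; rewrite -card_gt0 cardS.
have [x xS xmax] := @arg_maxnP _ x0 (mem S) (fun z => #|color_class col S (col z)|) x0S.
have nbrsE : [set y in S | e x y] = S :\: color_class col S (col x).
  apply/setP => y; rewrite !inE e_col eq_sym andbC.
  by case: (_ \in S); rewrite /= ?andbT ?andbF.
have card_nbrs : n.+1 <= #|[set y in S | e x y]|.
  rewrite nbrsE cardsD cardS; have := small (col x).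
  by have := subset_leq_card (subsetIr S (color_class col S (col x))); lia.
rewrite factS; apply: leq_trans (sum_perfect_matchings_setD2 e xS).
apply: leq_trans (leq_mul card_nbrs (leqnn n`!)) _.
rewrite -sum_nat_const (eq_bigl (fun y => (y \in S) && e x y)) => [|y]; last first.
  by rewrite inE.
apply: leq_sum => y /andP[yS exy]; apply: IHn.
  have xy : x != y by apply: contraTneq exy => ->; rewrite e_col eqxx.
  rewrite cardsD (setIidPr _) ?cards2 ?xy ?cardS; first by lia.
  by apply/subsetP => z /set2P[]->.
apply: (card_color_class_setD2 cardS small xS xmax yS); by rewrite eq_sym -e_col.
Qed.

End CompleteMultipartite.

Theorem lemma27 (T : finType) (e : rel T) (n : nat) :
  simple_graph e ->
  complete_multipartite e ->
  #|T| = n.*2 ->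
  alpha e <= n ->
  n`! <= #|[set M : {set {set T}} | perfect_matching e M]|.
Proof.
move=> _ [P [_ e_P]] cardT alpha_le.
apply: (perfect_matchings_on_ge e_P); first by rewrite cardsT.
move=> c; apply: leq_trans alpha_le.
exact: leq_bigmax_cond (independent_color_class e_P _ _).
Qed.
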